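(* Let $H$ be a commutative Hopf algebra over a field $k$ with counit $\varepsilon$, and let $B$ be a Rota-Baxter co-operator on $H$. Then $\varepsilon\circ B=\varepsilon$.
   Context: Sweedler notation $\Delta(x)=x_1\otimes x_2$, iterated as $x_1\otimes x_2\otimes x_3\otimes x_4$. A Rota-Baxter co-operator on a commutative Hopf algebra $(H,S)$ is an algebra map $B:H\to H$ such that for all $x\in H$: $B(x_1)\otimes B(x_2)=B(x)_1\,B\big(B(x)_2S(B(x)_4)\big)\otimes B(x)_3$, where $B(x)_1\otimes B(x)_2\otimes B(x)_3\otimes B(x)_4$ denotes the threefold iterated coproduct of $B(x)$. *)

(* Commutative Hopf algebras over a field, with elements of
   tensor powers represented by finite formal sums (sequences of pure tensors)
   and equality in the tensor power given by the universal property: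
   two formal sums are equal in H (x) H iff every bilinear map into every
   k-vector space takes the same value on them (similarly for H (x) H (x) H). *)
From HB Require Import structures.
From mathcomp Require Import all_boot all_order all_algebra.
Set Implicit Arguments. Unset Strict Implicit. Unset Printing Implicit Defensive.
Import Order.TTheory GRing.Theory Num.Theory.
Local Open Scope ring_scope.

Section Hopf.
Variables (k : fieldType) (H : comAlgType k).

Definition bilin (V : lmodType k) (phi : H -> H -> V) : Prop :=
  (forall a, linear (phi a)) /\ (forall b, linear (fun a => phi a b)).

Definition trilin (V : lmodType k) (phi : H -> H -> H -> V) : Prop :=
  [/\ forall a b, linear (phi a b),
      forall a c, linear (fun b => phi a b c) &
      forall b c, linear (fun a => phi a b c)].

Definition teq2 (s t : seq (H * H)) : Prop :=
  forall (V : lmodType k) (phi : H -> H -> V), bilin phi ->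
    \sum_(p <- s) phi p.1 p.2 = \sum_(p <- t) phi p.1 p.2.

Definition teq3 (s t : seq (H * H * H)) : Prop :=
  forall (V : lmodType k) (phi : H -> H -> H -> V), trilin phi ->
    \sum_(p <- s) phi p.1.1 p.1.2 p.2 = \sum_(p <- t) phi p.1.1 p.1.2 p.2.

Definition tscale2 (c : k) (s : seq (H * H)) : seq (H * H) :=
  [seq (c *: p.1, p.2) | p <- s].

Definition tmul2 (s t : seq (H * H)) : seq (H * H) :=
  [seq (p.1 * q.1, p.2 * q.2) | p <- s, q <- t].

Definition is_algmap (f : H -> H) : Prop :=
  linear f /\ (forall a b, f (a * b) = f a * f b) /\ f 1 = 1.

Definition is_hopf (cop : H -> seq (H * H)) (eps : H -> k) (ant : H -> H) : Prop :=
     (forall (c : k) (a b : H), teq2 (cop (c *: a + b)) (tscale2 c (cop a) ++ cop b))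
  /\ (forall a b : H, teq2 (cop (a * b)) (tmul2 (cop a) (cop b)))
  /\ teq2 (cop 1) [:: (1, 1)]
  /\ (forall a : H, teq3 [seq (p.1, q.1, q.2) | p <- cop a, q <- cop p.2]
                         [seq (q.1, q.2, p.2) | p <- cop a, q <- cop p.1])
  /\ (forall (c : k) (a b : H), eps (c *: a + b) = c * eps a + eps b)
  /\ (forall a b : H, eps (a * b) = eps a * eps b)
  /\ eps 1 = 1
  /\ (forall a : H, \sum_(p <- cop a) eps p.1 *: p.2 = a /\
                    \sum_(p <- cop a) eps p.2 *: p.1 = a)
  /\ linear ant
  /\ (forall a : H, \sum_(p <- cop a) ant p.1 * p.2 = eps a *: 1 /\
                    \sum_(p <- cop a) p.1 * ant p.2 = eps a *: 1).

(* threefold iterated coproduct: y_1 (x) y_2 (x) y_3 (x) y_4, as ((y1,y2),y3),y4 *)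
Definition cop3 (cop : H -> seq (H * H)) (y : H) : seq (H * H * H * H) :=
  flatten [seq [seq (p.1, q.1, r.1, r.2) | r <- cop q.2] | p <- cop y, q <- cop p.2].

(* Rota-Baxter co-operator:
   B(x_1) (x) B(x_2) = B(x)_1 B(B(x)_2 S(B(x)_4)) (x) B(x)_3 *)
Definition is_RB_cooperator (cop : H -> seq (H * H)) (ant : H -> H) (B : H -> H) : Prop :=
  is_algmap B /\
  forall x : H,
    teq2 [seq (B p.1, B p.2) | p <- cop x]
         [seq (u.1.1.1 * B (u.1.1.2 * ant u.2), u.1.2) | u <- cop3 cop (B x)].

End Hopf.

(** The functional [f := eps \o B] is a character of [H], i.e. an element of
    the group of algebra maps [H -> k] under convolution [phi * psi := (phi
    (x) psi) \o cop], with unit [eps] and inverses [f \o ant]. Applying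
    [eps (x) eps] to the Rota-Baxter identity and contracting with the counit
    and antipode axioms gives [f * f = f]; an idempotent of a group is its
    unit, so [f = eps]. *)
From HB Require Import structures.
From mathcomp Require Import all_boot all_order all_algebra.
Set Implicit Arguments. Unset Strict Implicit. Unset Printing Implicit Defensive.
Import GRing.Theory.
Local Open Scope ring_scope.

Section LinearFun.
Variables (k : fieldType) (V : lmodType k).

Lemma linear_mull (g : V -> k^o) (c : k) : linear g -> linear (fun a => (c * g a : k^o)).
Proof. by move=> g_lin d u v; rewrite g_lin /= mulrDr mulrCA. Qed.

Lemma linear_mulr (g : V -> k^o) (c : k) : linear g -> linear (fun a => (g a * c : k^o)).
Proof. by move=> g_lin d u v; rewrite g_lin /= mulrDl scalerAl. Qed.

Variables (W : lmodType k) (g : V -> W).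
Hypothesis g_lin : linear g.

Lemma linear_fun0 : g 0 = 0.
Proof.
by apply/(@addrI _ (g 0)); rewrite addr0 -{1}(scale1r (g 0)) -g_lin addr0 scale1r.
Qed.

Lemma linear_funZ c a : g (c *: a) = c *: g a.
Proof. by rewrite -(addr0 (c *: a)) g_lin linear_fun0 addr0. Qed.

Lemma linear_fun_sum (I : Type) (s : seq I) (F : I -> V) :
  g (\sum_(i <- s) F i) = \sum_(i <- s) g (F i).
Proof.
elim: s => [|a s IH]; first by rewrite !big_nil linear_fun0.
by rewrite !big_cons -{1}(scale1r (F a)) g_lin scale1r IH.
Qed.

End LinearFun.

Section Convolution.
Variables (k : fieldType) (H : comAlgType k).

Definition is_character (f : H -> k) : Prop := linear (f : H -> k^o) /\ monoid_morphism f.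

Lemma character_comp_algmap f g : is_character f -> is_algmap g -> is_character (f \o g).
Proof.
move=> [f_lin [f1 fM]] [g_lin [gM g1]]; split=> [c u v|] /=; first by rewrite g_lin f_lin.
by split=> [|a b] /=; rewrite ?g1 ?gM.
Qed.

Variables (cop : H -> seq (H * H)) (eps : H -> k) (ant : H -> H).

Definition conv (phi psi : H -> k) (a : H) : k := \sum_(p <- cop a) phi p.1 * psi p.2.

Lemma eq_conv phi phi' psi psi' : phi =1 phi' -> psi =1 psi' -> conv phi psi =1 conv phi' psi'.
Proof. by move=> eq_phi eq_psi a; apply: eq_bigr => p _; rewrite eq_phi eq_psi. Qed.

Hypothesis hopf : is_hopf cop eps ant.

Lemma eps_character : is_character eps.
Proof.
by case: hopf => _ [_ [_ [_ [epsL [epsM [eps1 _]]]]]]; split=> [c u v|]; rewrite ?epsL.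
Qed.

Lemma linear_ant : linear ant.
Proof. by case: hopf => _ [_ [_ [_ [_ [_ [_ [_ [antL _]]]]]]]]. Qed.

Lemma sum_cop_eps_l (V : lmodType k) (g : H -> V) a :
  linear g -> \sum_(p <- cop a) eps p.1 *: g p.2 = g a.
Proof.
case: hopf => _ [_ [_ [_ [_ [_ [_ [counit _]]]]]]] g_lin.
rewrite -{2}[a](counit a).1 (linear_fun_sum g_lin).
by apply: eq_bigr => p _; rewrite (linear_funZ g_lin).
Qed.

Lemma sum_cop_eps_r (V : lmodType k) (g : H -> V) a :
  linear g -> \sum_(p <- cop a) eps p.2 *: g p.1 = g a.
Proof.
case: hopf => _ [_ [_ [_ [_ [_ [_ [counit _]]]]]]] g_lin.
rewrite -{2}[a](counit a).2 (linear_fun_sum g_lin).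
by apply: eq_bigr => p _; rewrite (linear_funZ g_lin).
Qed.

Lemma sum_cop_ant_l (V : lmodType k) (g : H -> V) a :
  linear g -> \sum_(p <- cop a) g (ant p.1 * p.2) = eps a *: g 1.
Proof.
case: hopf => _ [_ [_ [_ [_ [_ [_ [_ [_ antipode]]]]]]]] g_lin.
by rewrite -(linear_funZ g_lin) -(antipode a).1 (linear_fun_sum g_lin).
Qed.

Lemma sum_cop_ant_r (V : lmodType k) (g : H -> V) a :
  linear g -> \sum_(p <- cop a) g (p.1 * ant p.2) = eps a *: g 1.
Proof.
case: hopf => _ [_ [_ [_ [_ [_ [_ [_ [_ antipode]]]]]]]] g_lin.
by rewrite -(linear_funZ g_lin) -(antipode a).2 (linear_fun_sum g_lin).
Qed.

Lemma conv_epsl (phi : H -> k) : linear (phi : H -> k^o) -> conv eps phi =1 phi.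
Proof. by move=> phi_lin a; rewrite -[RHS](sum_cop_eps_l a phi_lin). Qed.

Lemma conv_ant_character f : is_character f -> conv (f \o ant) f =1 eps.
Proof.
move=> [f_lin [f1 fM]] a; rewrite /conv.
under eq_bigr do rewrite /= -fM.
by rewrite (sum_cop_ant_l a f_lin) f1; exact: mulr1.
Qed.

Lemma conv_assoc (phi psi chi : H -> k) :
    linear (phi : H -> k^o) -> linear (psi : H -> k^o) -> linear (chi : H -> k^o) ->
  conv (conv phi psi) chi =1 conv phi (conv psi chi).
Proof.
move=> phi_lin psi_lin chi_lin a.
have prod_trilin : trilin (fun a b c : H => (phi a * psi b * chi c : k^o)).
  split=> [a' b'|a' c'|b' c']; do ?apply: linear_mulr; by [|exact: linear_mull].
case: hopf => _ [_ [_ [coass _]]].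
have := coass a _ _ prod_trilin; rewrite !big_allpairs_dep /= => {}coass.
rewrite /conv; under eq_bigr do rewrite big_distrl /=.
under [RHS]eq_bigr do rewrite big_distrr /=.
by rewrite -coass; apply: eq_bigr => p _; apply: eq_bigr => q _; rewrite mulrA.
Qed.

Lemma character_conv_idem f : is_character f -> conv f f =1 f -> f =1 eps.
Proof.
move=> f_char f_idem a; have [f_lin _] := f_char.
have fant_lin : linear (f \o ant : H -> k^o).
  by move=> c u v /=; rewrite linear_ant f_lin.
rewrite -[LHS](conv_epsl f_lin) -(eq_conv (conv_ant_character f_char) (frefl f)).
by rewrite conv_assoc // (eq_conv (frefl _) f_idem) conv_ant_character.
Qed.

Variable B : H -> H.
Hypothesis RB : is_RB_cooperator cop ant B.

Lemma RB_conv_idem : conv (eps \o B) (eps \o B) =1 eps \o B.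
Proof.
have [eps_lin [_ epsM]] := eps_character.
have [B_alg RB_eq] := RB.
have [f_lin [f1 _]] := character_comp_algmap eps_character B_alg.
move=> y; have eps_bilin : bilin (fun a b : H => (eps a * eps b : k^o)).
  by split=> a; [exact: linear_mull | exact: linear_mulr].
have := RB_eq y _ _ eps_bilin; rewrite big_map /conv /= => ->.
rewrite big_map /cop3 big_flatten /= big_allpairs_dep /=.
(* contract the last index by the counit, the middle one by the antipode and
   the first one by the counit again *)
rewrite -[RHS](sum_cop_eps_l _ eps_lin); apply: eq_bigr => p _.
under eq_bigr => q _.
  rewrite big_map; under eq_bigr do rewrite /= epsM -mulrA [_ * eps _]mulrC.
  rewrite -big_distrr /=.
  rewrite (sum_cop_eps_l (g := fun b => eps (B (q.1 * ant b)) : k^o)); last first.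
    by move=> c u v; rewrite linear_ant mulrDr -scalerAr; exact: f_lin.
  over.
by rewrite -big_distrr /= (sum_cop_ant_r _ f_lin) f1; congr (_ * _); exact: mulr1.
Qed.

End Convolution.

Theorem proposition3p2 (k : fieldType) (H : comAlgType k)
    (cop : H -> seq (H * H)) (eps : H -> k) (ant : H -> H) (B : H -> H) :
  is_hopf cop eps ant -> is_RB_cooperator cop ant B ->
  forall x : H, eps (B x) = eps x.
Proof.
move=> hopf RB.
apply: (character_conv_idem (f := eps \o B) hopf).
  exact: (character_comp_algmap (eps_character hopf) RB.1).
exact: (RB_conv_idem hopf RB).
Qed.
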